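(* Let $Q$ be the unique positive radial solution in $H^1(\mathbb{R}^2)$ of $-\Delta u+u-u^3=0$ and $a^*=\|Q\|_2^2$. Suppose positive constants $b_1,b_2,\beta$ satisfy $0<b_1<b_2<a^*$ and $b_2\le2\beta+b_1$. Define $$l(t)=\frac{t^2+t}{\frac{b_2}{2}t^2+\beta t+\frac{b_1}{2}},\quad t\in[0,\infty).$$ Then $l(t)>l(1)=\frac{2}{\frac{b_2}{2}+\beta+\frac{b_1}{2}}$ for all $t\in(1,\infty)$. *)

From Stdlib Require Import Reals Lra.
From Coquelicot Require Import Coquelicot.
Open Scope R_scope.

(* Q(x) = q(|x|) on R^2: q is the radial profile of the positive radial
   H^1(R^2) solution of  -Delta u + u - u^3 = 0.  In polar coordinates the
   Laplacian of a radial function is q'' + q'/r. *)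
Definition is_ground_state_profile (q : R -> R) : Prop :=
  (forall r, 0 <= r -> 0 < q r) /\
  continuous q 0 /\
  (forall r, 0 < r ->
     ex_derive q r /\ ex_derive (Derive q) r /\
     - (Derive_n q 2 r + Derive q r / r) + q r - q r ^ 3 = 0) /\
  (* Q in H^1(R^2): Q and grad Q square integrable (polar coordinates) *)
  ex_RInt_gen (fun r => 2 * PI * r * (q r) ^ 2) (at_right 0) (Rbar_locally p_infty) /\
  ex_RInt_gen (fun r => 2 * PI * r * (Derive q r) ^ 2) (at_right 0) (Rbar_locally p_infty).

Definition is_astar (q : R -> R) (astar : R) : Prop :=
  is_RInt_gen (fun r => 2 * PI * r * (q r) ^ 2) (at_right 0) (Rbar_locally p_infty) astar.

Definition l_fun (b1 b2 beta t : R) : R :=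
  (t ^ 2 + t) / (b2 / 2 * t ^ 2 + beta * t + b1 / 2).

From Stdlib Require Import Reals Lra Psatz.
From Coquelicot Require Import Coquelicot.
Open Scope R_scope.

(** The hypotheses on the ground state only serve to place [b1] and [b2]
    below [a*]; the inequality itself is elementary.  Clearing denominators,
    [l t - l 1] has the sign of
    [(t^2 + t) D(1) - 2 D(t) = (t - 1) ((beta + b1/2 - b2/2) t + b1)],
    where [D] is the denominator of [l]; for [t > 1] both factors are
    positive because [b2 <= 2 beta + b1] and [b1 > 0]. *)

Definition l_denom (b1 b2 beta t : R) : R := b2 / 2 * t ^ 2 + beta * t + b1 / 2.

Lemma l_denom_pos (b1 b2 beta t : R) :
  0 < b1 -> 0 < b2 -> 0 <= beta -> 0 <= t -> 0 < l_denom b1 b2 beta t.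
Proof. intros; unfold l_denom; nra. Qed.

Lemma l_fun_1 (b1 b2 beta : R) :
  l_fun b1 b2 beta 1 = 2 / (b2 / 2 + beta + b1 / 2).
Proof. unfold l_fun; f_equal; ring. Qed.

Lemma l_cross_difference (b1 b2 beta t : R) :
  (t ^ 2 + t) * l_denom b1 b2 beta 1 - 2 * l_denom b1 b2 beta t
  = (t - 1) * ((beta + b1 / 2 - b2 / 2) * t + b1).
Proof. unfold l_denom; field. Qed.

Lemma l_fun_gt_l_fun_1 (b1 b2 beta t : R) :
  0 < b1 -> b1 < b2 -> 0 < beta -> b2 <= 2 * beta + b1 -> 1 < t ->
  l_fun b1 b2 beta 1 < l_fun b1 b2 beta t.
Proof.
  intros Hb1 Hb12 Hbeta Hb2 Ht.
  assert (Dt : 0 < l_denom b1 b2 beta t) by (apply l_denom_pos; lra).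
  assert (D1 : 0 < l_denom b1 b2 beta 1) by (apply l_denom_pos; lra).
  assert (Hcross :
    0 < (t ^ 2 + t) * l_denom b1 b2 beta 1 - 2 * l_denom b1 b2 beta t).
  { rewrite l_cross_difference; apply Rmult_lt_0_compat; nra. }
  rewrite l_fun_1; unfold l_fun; fold (l_denom b1 b2 beta t).
  replace (b2 / 2 + beta + b1 / 2) with (l_denom b1 b2 beta 1)
    by (unfold l_denom; ring).
  apply (Rmult_lt_reg_r (l_denom b1 b2 beta t)); [exact Dt|].
  apply (Rmult_lt_reg_r (l_denom b1 b2 beta 1)); [exact D1|].
  field_simplify; lra.
Qed.

Theorem lemmaA1 (q : R -> R) (astar b1 b2 beta : R) :
  is_ground_state_profile q -> is_astar q astar ->
  0 < b1 -> b1 < b2 -> b2 < astar -> 0 < beta -> b2 <= 2 * beta + b1 ->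
  l_fun b1 b2 beta 1 = 2 / (b2 / 2 + beta + b1 / 2) /\
  (forall t, 1 < t -> l_fun b1 b2 beta t > l_fun b1 b2 beta 1).
Proof.
  intros _ _ Hb1 Hb12 _ Hbeta Hb2.
  split.
  - exact (l_fun_1 b1 b2 beta).
  - intros t Ht; exact (l_fun_gt_l_fun_1 b1 b2 beta t Hb1 Hb12 Hbeta Hb2 Ht).
Qed.
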